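(* Let $m\ge3$, $n=2^m-1$, and let $\mathcal{C}$ be the $[2^m-1,2^m-1-m]$ binary Hamming code whose parity-check matrix has, as its $i$-th column, the binary representation of $i$ (as an $m$-bit vector), for $1\le i\le 2^m-1$. Then \[ N(\mathcal{C};S_2)=2^{\lfloor (2^m-1)/2\rfloor-1}. \]
   Context: $S_2\subseteq\{0,1\}^n$ (the 2-charge constraint) is the set of $\mathbf{x}\in\{0,1\}^n$ such that, with $y_i=(-1)^{x_i}$, $0\le\sum_{i=1}^r y_i\le 2$ for all $1\le r\le n$. $N(\mathcal{C};S_2)=|\mathcal{C}\cap S_2|$ is the number of codewords of $\mathcal{C}$ in $S_2$. *)

From mathcomp Require Import all_boot all_order all_algebra.
Set Implicit Arguments. Unset Strict Implicit. Unset Printing Implicit Defensive.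
Import Order.TTheory GRing.Theory Num.Theory.
Local Open Scope ring_scope.

(* Parity-check matrix of the binary Hamming code of length 2^m - 1:
   column i (0-indexed, i.e. the (i+1)-th column) is the m-bit binary
   representation of i+1; row j holds bit j (little-endian). *)
Definition hamming_H (m : nat) : 'M['F_2]_(m, 2 ^ m - 1) :=
  \matrix_(j < m, i < 2 ^ m - 1) ((((i.+1) %/ 2 ^ j) %% 2)%N%:R : 'F_2).

Definition hamming_code (m : nat) : {set 'rV['F_2]_(2 ^ m - 1)} :=
  [set c | hamming_H m *m c^T == 0].

Definition spin (b : 'F_2) : int := if b == 0 then 1 else -1.

Definition S2 (n : nat) : {set 'rV['F_2]_n} :=
  [set x : 'rV['F_2]_n | [forall r : 'I_n.+1,
     (0 <= \sum_(i < n | (i < r)%N) spin (x 0 i)) &&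
     (\sum_(i < n | (i < r)%N) spin (x 0 i) <= 2)]].

Definition Ncount (n : nat) (C S : {set 'rV['F_2]_n}) : nat := #|C :&: S|.

From mathcomp Require Import all_boot all_order all_algebra zify.
Set Implicit Arguments. Unset Strict Implicit. Unset Printing Implicit Defensive.
Import Order.TTheory GRing.Theory Num.Theory.
Local Open Scope ring_scope.

(* Write n = 2K + 1 with K = 2^(m-1) - 1.  A word lies in S_2 iff all its
   prefix sums of odd length equal 1, i.e. iff x_0 = 0 and every pair
   (x_(2k+1), x_(2k+2)) is (v_k, 1 + v_k); these words correspond bijectively
   to the v in F_2^K.  On such a word, parity check j > 0 reduces to the
   number of ones in bit j-1 of 0, ..., 2^(m-1) - 1, that is 2^(m-2), which is
   even since m >= 3; parity check 0 reduces to K + sum_k v_k with K odd.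
   Hence the count is the number of odd-weight v in F_2^K, namely 2^(K-1). *)

Lemma F2_cases (b : 'F_2) : b = 0 \/ b = 1.
Proof. by case: b => [[|[|k]] //= Hk]; [left | right]; apply/val_inj. Qed.

Lemma F2_addrr (b : 'F_2) : b + b = 0.
Proof. by case: (F2_cases b) => ->; [rewrite addr0 | apply/val_inj]. Qed.

Lemma F2_natr (t : nat) : (t%:R : 'F_2) = (odd t)%:R.
Proof. by rewrite -(Fp_nat_mod (p := 2)) // modn2. Qed.

Definition charge (a : nat -> 'F_2) (r : nat) : int := \sum_(0 <= i < r) spin (a i).

Definition charge_bounded (a : nat -> 'F_2) (n : nat) : Prop :=
  forall r, (r <= n)%N -> 0 <= charge a r <= 2.

Definition paired (a : nat -> 'F_2) (K : nat) : Prop :=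
  a 0%N = 0 /\ forall k, (k < K)%N -> a k.*2.+2 = 1 + a k.*2.+1.

Lemma charge0 a : charge a 0 = 0.
Proof. by rewrite /charge big_geq. Qed.

Lemma chargeS a r : charge a r.+1 = charge a r + spin (a r).
Proof. by rewrite /charge big_nat_recr. Qed.

Lemma spin_pair_bounded (b c : 'F_2) :
  (0 <= 1 + spin b + spin c <= 2) = (c == 1 + b).
Proof.
by case: (F2_cases b) => ->; case: (F2_cases c) => ->; rewrite /spin /= ?addr0.
Qed.

Lemma spin_pair (b : 'F_2) : spin b + spin (1 + b) = 0.
Proof. by case: (F2_cases b) => ->; rewrite /spin /= ?addr0. Qed.

Lemma spin_bounded (b : 'F_2) : 0 <= 1 + spin b <= 2.
Proof. by case: (F2_cases b) => ->. Qed.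

Lemma charge_boundedS a n :
  charge_bounded a n.+1 <-> charge_bounded a n /\ 0 <= charge a n.+1 <= 2.
Proof.
split=> [Ha | [Ha Hn] r].
- by split=> [r hr|]; apply: Ha; lia.
- by rewrite leq_eqVlt => /orP[/eqP-> // | /Ha].
Qed.

Lemma pairedS a K : paired a K.+1 <-> paired a K /\ a K.*2.+2 = 1 + a K.*2.+1.
Proof.
split=> [[a0 Ha] | [[a0 Ha] HK]].
- by split; [split=> // k hk |]; apply: Ha; lia.
- split=> // k; rewrite ltnS leq_eqVlt => /orP[/eqP-> // | /Ha //].
Qed.

Lemma charge_paired a K : paired a K -> charge a K.*2.+1 = 1.
Proof.
elim: K => [[a0 _]|K IH /pairedS[/IH HK Hc]]; first by rewrite chargeS charge0 a0.
by rewrite doubleS (chargeS a K.*2.+2) chargeS HK Hc -addrA spin_pair addr0.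
Qed.

Lemma charge_boundedP a K : charge_bounded a K.*2.+1 <-> paired a K.
Proof.
elim: K => [|K IH].
  rewrite charge_boundedS chargeS charge0 add0r /paired.
  have bounded0 : charge_bounded a 0 by case=> // _; rewrite charge0.
  by case: (F2_cases (a 0%N)) => ->; split=> // -[].
rewrite doubleS (charge_boundedS a K.*2.+2) (charge_boundedS a K.*2.+1) pairedS -IH.
split=> [[[HK _] Hb] | [HK Hc]].
- split=> //; apply/eqP; rewrite -spin_pair_bounded.
  by move: Hb; rewrite (chargeS a K.*2.+2) chargeS (charge_paired (IH.1 HK)).
- have Hp := charge_paired (IH.1 HK).
  split; [split=> // | rewrite (chargeS a K.*2.+2)]; rewrite chargeS Hp.
    exact: spin_bounded.
  by rewrite Hc -addrA spin_pair addr0.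
Qed.

Section Bits.
Local Open Scope nat_scope.

Definition bit (j k : nat) : nat := (k %/ 2 ^ j) %% 2.

Lemma bit0n k : bit 0 k = odd k.
Proof. by rewrite /bit expn0 divn1 modn2. Qed.

Lemma bit_small j k : k < 2 ^ j -> bit j k = 0.
Proof. by move=> hk; rewrite /bit divn_small. Qed.

Lemma bit_expD j q k : j < q -> bit j (2 ^ q + k) = bit j k.
Proof.
move=> hjq; rewrite /bit.
have -> : 2 ^ q = (2 * 2 ^ (q - j).-1) * 2 ^ j.
  by rewrite -expnS -expnD; congr (2 ^ _); lia.
by rewrite divnMDl ?expn_gt0 // mulnC modnMDl.
Qed.

Lemma bit_expD_small q k : k < 2 ^ q -> bit q (2 ^ q + k) = 1.
Proof.
by move=> hk; rewrite /bit -{1}[2 ^ q]mul1n divnMDl ?expn_gt0 // divn_small.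
Qed.

Lemma bit_double j k : 0 < j -> bit j k.*2 = bit j.-1 k.
Proof. by move=> hj; rewrite /bit -(prednK hj) expnS -mul2n divnMl. Qed.

Lemma bit_doubleS j k : 0 < j -> bit j k.*2.+1 = bit j k.*2.
Proof.
move=> hj; rewrite /bit -(prednK hj) expnS !divnMA.
by congr (_ %/ _ %% 2); lia.
Qed.

Lemma sum_bit j q : j < q -> \sum_(0 <= k < 2 ^ q) bit j k = 2 ^ q.-1.
Proof.
elim: q => // q IH; rewrite ltnS leq_eqVlt => /orP[/eqP-> | hjq].
- rewrite expnS mul2n -addnn (big_cat_nat _ (n := 2 ^ q)) ?leq_addr //=.
  rewrite -{2}[2 ^ q]add0n big_addn addnK.
  rewrite big_nat big1 ?add0n => [|k /andP[_ hk]]; last exact: bit_small.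
  rewrite big_nat (eq_bigr (fun=> 1)) => [|k /andP[_ hk]]; last first.
    by rewrite addnC bit_expD_small.
  by rewrite -big_nat sum_nat_const_nat subn0 muln1.
- rewrite expnS mul2n -addnn (big_cat_nat _ (n := 2 ^ q)) ?leq_addr //=.
  rewrite -{2}[2 ^ q]add0n big_addn addnK.
  rewrite [X in _ + X](eq_bigr (bit j)) => [|k _]; last by rewrite addnC bit_expD.
  by rewrite IH // addnn -mul2n -expnS prednK //; lia.
Qed.

End Bits.

Lemma sum_pairs (R : nmodType) (F : nat -> R) K :
  \sum_(0 <= i < K.*2.+1) F i = F 0%N + \sum_(0 <= k < K) (F k.*2.+1 + F k.*2.+2).
Proof.
elim: K => [|K IH]; first by rewrite big_nat1 big_geq // addr0.
by rewrite doubleS 2?big_nat_recr // [in RHS]big_nat_recr //= IH !addrA.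
Qed.

Lemma parity_row_paired (a : nat -> 'F_2) K j : paired a K ->
  \sum_(0 <= i < K.*2.+1) (bit j i.+1)%:R * a i =
  \sum_(0 <= k < K)
    ((bit j k.*2.+2)%:R * a k.*2.+1 + (bit j k.*2.+3)%:R * (1 + a k.*2.+1)).
Proof.
case=> a0 Ha; rewrite sum_pairs a0 mulr0 add0r.
by apply: eq_big_nat => k /andP[_ /Ha ->].
Qed.

Lemma parity_row0_paired (a : nat -> 'F_2) K : paired a K ->
  \sum_(0 <= i < K.*2.+1) (bit 0 i.+1)%:R * a i = K%:R + \sum_(0 <= k < K) a k.*2.+1.
Proof.
move/parity_row_paired->; rewrite -[K in K%:R]subn0 -sumr_const_nat -big_split /=.
by apply: eq_bigr => k _; rewrite !bit0n /= odd_double mul0r mul1r add0r.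
Qed.

Lemma parity_rowS_paired (a : nat -> 'F_2) K j : (0 < j)%N -> paired a K ->
  \sum_(0 <= i < K.*2.+1) (bit j i.+1)%:R * a i = (\sum_(0 <= k < K.+1) bit j.-1 k)%:R.
Proof.
move=> hj /parity_row_paired->.
rewrite big_nat_recl // [bit _ 0]bit_small ?expn_gt0 // add0n natr_sum.
apply: eq_bigr => k _; rewrite -doubleS bit_doubleS // bit_double //.
by rewrite mulrDr mulr1 addrCA -mulrDl F2_addrr mul0r addr0.
Qed.

(* Entries outside the row are read as 0. *)
Definition entry n (x : 'rV['F_2]_n) (k : nat) : 'F_2 :=
  if insub k is Some i then x 0 i else 0.

Lemma entryE n (x : 'rV['F_2]_n) (i : 'I_n) : entry x i = x 0 i.
Proof. by rewrite /entry valK. Qed.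

Lemma sum_entry (R : nmodType) n (F : nat -> 'F_2 -> R) (x : 'rV['F_2]_n) :
  \sum_(i < n) F i (x 0 i) = \sum_(0 <= i < n) F i (entry x i).
Proof. by rewrite big_mkord; apply: eq_bigr => i _; rewrite entryE. Qed.

Lemma in_S2 n (x : 'rV['F_2]_n) : x \in S2 n <-> charge_bounded (entry x) n.
Proof.
have chargeE r : (r <= n)%N ->
    \sum_(i < n | (i < r)%N) spin (x 0 i) = charge (entry x) r.
  move=> hr; rewrite /charge big_mkord.
  rewrite (big_ord_widen_cond n xpredT (fun i => spin (entry x i)) hr).
  by apply: eq_big => // i; rewrite entryE.
rewrite inE; split=> [/forallP Hx r hr | Hx].
- by rewrite -chargeE //; apply: (Hx (Ordinal (hr : (r < n.+1)%N))).
- apply/forallP => r; have hr : (r <= n)%N by rewrite -ltnS.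
  by rewrite chargeE // Hx.
Qed.

Lemma in_hamming_code m (x : 'rV['F_2]_(2 ^ m - 1)) : x \in hamming_code m <->
  (forall j, (j < m)%N -> \sum_(0 <= i < 2 ^ m - 1) (bit j i.+1)%:R * entry x i = 0).
Proof.
have rowE j : (hamming_H m *m x^T) j 0 =
    \sum_(0 <= i < 2 ^ m - 1) (bit j i.+1)%:R * entry x i.
  rewrite mxE -(sum_entry (fun i b => (bit j i.+1)%:R * b)).
  by apply: eq_bigr => i _; rewrite !mxE.
rewrite inE; split=> [/eqP Hx j hj | Hx].
- by rewrite -(rowE (Ordinal hj)) Hx mxE.
- by apply/eqP/matrixP => j k; rewrite ord1 rowE mxE Hx.
Qed.

(* The word [0; v 0; 1 + v 0; v 1; 1 + v 1; ...]. *)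
Definition spread (v : nat -> 'F_2) (i : nat) : 'F_2 :=
  if i is i'.+1 then (odd i')%:R + v i'./2 else 0.

Lemma spread_odd v k : spread v k.*2.+1 = v k.
Proof. by rewrite /= odd_double add0r doubleK. Qed.

Lemma spread_even v k : spread v k.*2.+2 = 1 + v k.
Proof. by rewrite /= odd_double uphalf_double. Qed.

Lemma spread_paired v K : paired (spread v) K.
Proof. by split=> // k _; rewrite spread_even spread_odd. Qed.

Lemma paired_spread (a v : nat -> 'F_2) K i : paired a K ->
  (forall k, (k < K)%N -> v k = a k.*2.+1) -> (i <= K.*2)%N -> a i = spread v i.
Proof.
case: i => [[a0 _] //|i [_ Ha] Hv hi].
set k := i./2; rewrite -(odd_double_half i) -/k in hi *.
case: (odd i) hi => hi.
- by rewrite add1n spread_even Ha ?Hv //; lia.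
- by rewrite add0n spread_odd Hv //; lia.
Qed.

Lemma card_sum1_rV_F2 K : (0 < K)%N ->
  #|[set v : 'rV['F_2]_K | \sum_k v 0 k == 1]| = (2 ^ K.-1)%N.
Proof.
move=> K_gt0; set A := [set v : 'rV['F_2]_K | _].
pose d : 'rV['F_2]_K := delta_mx 0 (Ordinal K_gt0).
have sum_subr v : \sum_k (d - v) 0 k = 1 - \sum_k v 0 k.
  rewrite (eq_bigr (fun k => d 0 k - v 0 k)) => [|k _]; last by rewrite !mxE.
  rewrite sumrB (bigD1 (Ordinal K_gt0)) //= big1 => [|k /negbTE k_neq].
    by rewrite !mxE !eqxx addr0.
  by rewrite mxE k_neq andbF.
have dA : [set d - v | v in A] = ~: A.
  apply/setP => v; rewrite !inE; apply/imsetP/idP => [[w] | v_notin].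
  - rewrite inE => /eqP w1 ->; rewrite sum_subr w1 subrr.
    by apply/eqP => /(congr1 val).
  - exists (d - v); last by rewrite subKr.
    by rewrite inE sum_subr; case: (F2_cases (\sum_k v 0 k)) v_notin => ->.
have := cardsC A; rewrite -dA card_imset; last exact: can_inj (subKr d).
rewrite card_mx card_Fp // mul1n addnn -mul2n.
have -> : (2 ^ K = 2 * 2 ^ K.-1)%N by rewrite -expnS prednK.
by move/eqP; rewrite eqn_mul2l => /eqP.
Qed.

Lemma entry_row n (f : nat -> 'F_2) k : (k < n)%N -> entry (\row_(i < n) f i) k = f k.
Proof. by move=> hk; rewrite -[k]/(nat_of_ord (Ordinal hk)) entryE mxE. Qed.

Definition spread_row n K (v : 'rV['F_2]_K) : 'rV['F_2]_n :=
  \row_(i < n) spread (entry v) i.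

Section SpreadRow.
Variables n K : nat.
Hypothesis n_def : n = K.*2.+1.

Lemma spread_row_odd (v : 'rV['F_2]_K) k :
  (k < K)%N -> entry (spread_row n v) k.*2.+1 = entry v k.
Proof. by move=> hk; rewrite entry_row ?spread_odd // n_def; lia. Qed.

Lemma paired_spread_row (v : 'rV['F_2]_K) : paired (entry (spread_row n v)) K.
Proof.
have [a0 Ha] := spread_paired (entry v) K.
split=> [|k hk]; rewrite !entry_row ?n_def //; try lia.
exact: Ha.
Qed.

Lemma spread_row_inj : injective (@spread_row n K).
Proof.
by move=> v w e; apply/rowP => k; rewrite -!entryE -!spread_row_odd // e.
Qed.

Lemma paired_spread_rowK (x : 'rV['F_2]_n) :
  paired (entry x) K -> spread_row n (\row_(k < K) entry x k.*2.+1) = x.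
Proof.
move=> Hx; apply/rowP => i; rewrite -entryE entry_row //.
rewrite -(paired_spread Hx) ?entryE //.
  by move=> k hk; rewrite (entry_row (fun j => entry x j.*2.+1)).
by rewrite -ltnS -n_def.
Qed.

End SpreadRow.

Section HammingS2.
Variable m : nat.
Hypothesis m_ge3 : (3 <= m)%N.

Let K := (2 ^ m.-1).-1.

Lemma hamming_length : (2 ^ m - 1 = K.*2.+1)%N.
Proof.
have -> : (2 ^ m = (2 ^ m.-1).*2)%N by rewrite -mul2n -expnS prednK //; lia.
by rewrite /K -[in LHS](prednK (expn_gt0 2 m.-1)); lia.
Qed.

Lemma odd_hamming_half : odd K.
Proof.
by rewrite /K -[odd _]negbK -oddS prednK ?expn_gt0 // oddX orbF -lt0n; lia.
Qed.

Lemma paired_in_hamming_code (x : 'rV['F_2]_(2 ^ m - 1)) : paired (entry x) K ->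
  x \in hamming_code m <-> \sum_(0 <= k < K) entry x k.*2.+1 = 1.
Proof.
move=> Hx; rewrite in_hamming_code.
have rowE j : \sum_(0 <= i < 2 ^ m - 1) (bit j i.+1)%:R * entry x i =
    \sum_(0 <= i < K.*2.+1) (bit j i.+1)%:R * entry x i by rewrite {1}hamming_length.
have row0 : \sum_(0 <= i < K.*2.+1) (bit 0 i.+1)%:R * entry x i =
    1 + \sum_(0 <= k < K) entry x k.*2.+1.
  by rewrite parity_row0_paired // F2_natr odd_hamming_half.
split=> [H | Hs j hj]; last case: j hj => [_|j hj]; rewrite ?rowE.
- have := H 0%N ltac:(lia); rewrite rowE row0.
  by case: (F2_cases (\sum_(0 <= k < K) entry x k.*2.+1)) => ->.
- by rewrite row0 Hs F2_addrr.
- rewrite parity_rowS_paired // prednK ?expn_gt0 // sum_bit; last lia.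
  by rewrite F2_natr oddX orbF; have -> : m.-2 == 0%N = false by apply/eqP; lia.
Qed.

Lemma hamming_S2_spread :
  hamming_code m :&: S2 (2 ^ m - 1) =
  @spread_row (2 ^ m - 1) K @: [set v : 'rV['F_2]_K | \sum_k v 0 k == 1].
Proof.
have boundedE x : charge_bounded (entry x) (2 ^ m - 1) <-> paired (entry x) K.
  by rewrite -charge_boundedP {1}hamming_length.
apply/setP => x; rewrite inE; apply/andP/imsetP => [[xC /in_S2/boundedE Hx] | [v]].
- exists (\row_(k < K) entry x k.*2.+1); last first.
    by rewrite paired_spread_rowK // hamming_length.
  rewrite inE -(paired_in_hamming_code Hx).1 // big_mkord.
  by apply/eqP/eq_bigr => k _; rewrite mxE.
- rewrite inE => /eqP v1 ->.
  have Hx := paired_spread_row hamming_length v.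
  split; last by apply/in_S2/boundedE.
  apply/(paired_in_hamming_code Hx); rewrite -[RHS]v1 big_mkord.
  by apply: eq_bigr => k _; rewrite (spread_row_odd hamming_length) ?entryE.
Qed.

End HammingS2.

Theorem mainTheorem12 (m : nat) (hm : (3 <= m)%N) :
  Ncount (hamming_code m) (S2 (2 ^ m - 1)) = (2 ^ ((2 ^ m - 1) %/ 2 - 1))%N.
Proof.
rewrite /Ncount hamming_S2_spread // card_imset; last first.
  exact: spread_row_inj (hamming_length hm).
rewrite card_sum1_rV_F2; last first.
  have : (2 ^ 1 < 2 ^ m.-1)%N by rewrite ltn_exp2l //; lia.
  lia.
have len := hamming_length hm; congr (expn 2 _); lia.
Qed.
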